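(* Let $k\ge2$ and $1\le n\le \ell$. Then $D_k(\ell)\le D_k(n)\,k^{\ell-n}$.
   Context: Labeled chip-firing on the infinite rooted directed $k$-ary tree (each vertex has $k$ children ordered left to right, root on layer $1$): a vertex with at least $k$ chips may fire by choosing any $k$ of its chips and sending the $i$-th smallest label among them to its $i$-th leftmost child; a configuration is stable when no vertex has $\ge k$ chips. Starting with $k^\ell$ chips labeled $1,\dots,k^\ell$ at the root, every stable configuration has exactly one chip on each vertex of layer $\ell+1$ and none elsewhere, and is identified with the permutation of labels read left to right on layer $\ell+1$. $D_k(\ell)$ denotes the maximum, over all reachable stable configurations, of the length of the longest strictly decreasing subsequence of the corresponding permutation. *)

From mathcomp Require Import all_boot.
From mathcomp Require Import boolp.
Set Implicit Arguments. Unset Strict Implicit. Unset Printing Implicit Defensive.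

(* Vertices of the infinite rooted k-ary tree are encoded by the path from the
   root: a sequence of child indices (0-based, 0 = leftmost).  The root is
   [::] (layer 1); a vertex w lies on layer (size w).+1.  Sequences containing
   an entry >= k are not tree vertices; they never receive chips. *)
Definition vertex := seq nat.

(* A configuration assigns to each vertex the multiset (as a list) of labels
   of the chips sitting on it. *)
Definition config := vertex -> seq nat.

Definition is_child (k : nat) (v w : vertex) : bool :=
  [&& size w == (size v).+1, take (size v) w == v & last 0 w < k].

Definition fire_step (k : nat) (C C' : config) : Prop :=
  exists (v : vertex) (S rest : seq nat),
    [/\ size S = k, perm_eq (C v) (S ++ rest) &
        forall w : vertex, C' w =
          if w == v then rest
          else if is_child k v w then C w ++ [:: nth 0 (sort leq S) (last 0 w)]
          else C w].

Inductive reaches (k : nat) : config -> config -> Prop :=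
  | reaches_refl C : reaches k C C
  | reaches_step C C' C'' : fire_step k C C' -> reaches k C' C'' -> reaches k C C''.

Definition init_config (k l : nat) : config :=
  fun w => if w == [::] then iota 1 (k ^ l) else [::].

Definition stable (k : nat) (C : config) : Prop := forall w : vertex, size (C w) < k.

Definition reachable_stable (k l : nat) (C : config) : Prop :=
  reaches k (init_config k l) C /\ stable k C.

(* The j-th vertex (0-based, left to right) of layer l+1: base-k digits of j,
   most significant first. *)
Definition layer_vertex (k l j : nat) : vertex :=
  [seq (j %/ k ^ (l - i.+1)) %% k | i <- iota 0 l].

(* The permutation read left to right on layer l+1 (one chip per vertex). *)
Definition perm_of (k l : nat) (C : config) : seq nat :=
  [seq head 0 (C (layer_vertex k l j)) | j <- iota 0 (k ^ l)].

Definition lds (s : seq nat) : nat :=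
  \max_(m : (size s).-tuple bool | sorted gtn (mask m s)) size (mask m s).

(* D_k(l): maximum of lds over reachable stable configurations
   (lds of perm_of is at most its size k^l). *)
Definition D (k l : nat) : nat :=
  \max_(m < (k ^ l).+1 |
        `[< exists C : config, reachable_stable k l C /\ lds (perm_of k l C) = m >]) m.

From mathcomp Require Import all_boot boolp zify.
Set Implicit Arguments. Unset Strict Implicit. Unset Printing Implicit Defensive.

(* Let u be a vertex on layer p+1 of a stable configuration reached from
   k^(p+n) chips.  Chips never leave the subtree of u, and firings inside it do
   not depend on when the chips arrive at u, so the subtree is also reached from
   the set X of all chips ever arriving at u, placed at u from the start.
   Counting chips (a vertex fires as often as it receives k chips) gives
   |X| = k^n, and relabelling X increasingly by 1..k^n turns the block of the
   bottom layer below u into a permutation counted by D_k(n).  The bottom layer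
   is the concatenation of k^p such blocks, and a decreasing subsequence of a
   concatenation splits into decreasing subsequences of the pieces. *)

Definition is_vertex (k : nat) (w : vertex) : bool := all (fun i => i < k) w.

Lemma is_vertex_rcons k p i : is_vertex k (rcons p i) = is_vertex k p && (i < k).
Proof. by rewrite /is_vertex all_rcons andbC. Qed.

Lemma is_vertex_cat k u w : is_vertex k (u ++ w) = is_vertex k u && is_vertex k w.
Proof. exact: all_cat. Qed.

Lemma is_child_id k v : is_child k v v = false.
Proof. by rewrite /is_child eqn_leq ltnn andbF. Qed.

Lemma is_child_rcons k v p i : is_child k v (rcons p i) = (p == v) && (i < k).
Proof.
rewrite /is_child size_rcons eqSS last_rcons -cats1.
case: (eqVneq p v) => [-> | neq_pv]; first by rewrite take_size_cat ?eqxx.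
case: eqP => //= eq_size; rewrite -eq_size take_size_cat //.
by rewrite (negbTE neq_pv).
Qed.

Lemma is_child_cat k u v w : is_child k (u ++ v) (u ++ w) = is_child k v w.
Proof.
case/lastP: w => [|p i]; first by rewrite cats0 /is_child size_cat; case: eqP => //; lia.
by rewrite -rcons_cat !is_child_rcons eqseq_cat // eqxx.
Qed.

Lemma is_child_rcons_last k v w : is_child k v w -> w = rcons v (last 0 w).
Proof.
by case/lastP: w => [|p i] //; rewrite is_child_rcons last_rcons => /andP[/eqP-> _].
Qed.

Definition parent (w : vertex) : vertex := take (size w).-1 w.

Lemma parent_rcons p i : parent (rcons p i) = p.
Proof. by rewrite /parent size_rcons -cats1 take_size_cat. Qed.

(* [g w] counts the firings of [w]: a non-root vertex receives one chip per
   firing of its parent, the root receives the [m] initial chips. *)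
Definition inflow (k m : nat) (g : vertex -> nat) (w : vertex) : nat :=
  if w is [::] then m else if is_vertex k w then g (parent w) else 0.

Lemma inflow_rcons k m g p i :
  inflow k m g (rcons p i) = if is_vertex k (rcons p i) then g p else 0.
Proof. by case: p => [|a p] //=; rewrite -rcons_cons parent_rcons. Qed.

Definition chip_balance (k m : nat) (C : config) : Prop :=
  exists g : vertex -> nat, forall w, size (C w) + k * g w = inflow k m g w.

Definition root_config (X : seq nat) : config := fun w => if w == [::] then X else [::].

Lemma chip_balance_root k X : chip_balance k (size X) (root_config X).
Proof.
exists (fun _ => 0) => -[|a w]; first by rewrite muln0 addn0.
by rewrite /= muln0; case: ifP.
Qed.

Lemma inflow_fire k m g v w : is_vertex k v ->
  inflow k m (fun x => g x + (x == v)) w = inflow k m g w + is_child k v w.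
Proof.
move=> vertex_v; case/lastP: w => [|p i]; first by rewrite addn0.
rewrite !inflow_rcons is_child_rcons is_vertex_rcons.
case: (eqVneq p v) => [-> | neq_pv]; first by rewrite vertex_v; case: (i < k).
by case: (_ && _); rewrite addn0.
Qed.

Definition distinct_labels (C : config) : Prop :=
  (forall w, uniq (C w)) /\ (forall w1 w2 x, x \in C w1 -> x \in C w2 -> w1 = w2).

Definition subtree (C : config) (u : vertex) (X : seq nat) : config :=
  fun w => if w is [::] then X else C (u ++ w).

Section FireStep.

Variables (k : nat) (C C' : config) (v : vertex) (S rest : seq nat).
Hypotheses (size_S : size S = k) (perm_v : perm_eq (C v) (S ++ rest))
  (def_C' : forall w : vertex, C' w =
     if w == v then rest
     else if is_child k v w then C w ++ [:: nth 0 (sort leq S) (last 0 w)]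
     else C w).

Let sent (w : vertex) := nth 0 (sort leq S) (last 0 w).

Lemma sent_mem w : is_child k v w -> sent w \in S.
Proof.
case/lastP: w => [|p i] //; rewrite is_child_rcons => /andP[_ lt_ik].
by rewrite -(mem_sort leq) mem_nth // size_sort size_S last_rcons.
Qed.

Lemma mem_fire_inv x w : x \in C' w ->
  [\/ w = v /\ x \in rest, w != v /\ x \in C w | is_child k v w /\ x = sent w].
Proof.
rewrite def_C'; case: (eqVneq w v) => [-> | neq_wv] xw; first by apply: Or31.
move: xw; case: ifP => child_w; last by move=> xw; apply: Or32.
by rewrite mem_cat inE => /orP[xw | /eqP->]; [apply: Or32 | apply: Or33].
Qed.

Lemma mem_fire x w : x \in C' w -> x \in C w \/ (is_child k v w /\ x \in C v).
Proof.
case/mem_fire_inv => [[-> x_rest] | [_ xw] | [child_w ->]]; last first.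
- by right; rewrite (perm_mem perm_v) mem_cat sent_mem.
- by left.
by left; rewrite (perm_mem perm_v) mem_cat x_rest orbT.
Qed.

Lemma size_fire w : size (C' w) + k * (w == v) = size (C w) + is_child k v w.
Proof.
rewrite def_C'; case: (eqVneq w v) => [-> | neq_wv].
  by rewrite (perm_size perm_v) size_cat size_S muln1 addnC is_child_id addn0.
by case: ifP; rewrite ?size_cat /= muln0 ?addn0.
Qed.

Lemma fire_chip_balance m : 0 < k -> chip_balance k m C -> chip_balance k m C'.
Proof.
move=> k_gt0 [g balance_g].
have size_v : 0 < size (C v) by rewrite (perm_size perm_v) size_cat size_S; lia.
have vertex_v : is_vertex k v.
  case/lastP: v size_v (balance_g v) => [//|p i].
  by rewrite inflow_rcons; case: ifP => // _; lia.
exists (fun x => g x + (x == v)) => w.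
by rewrite inflow_fire // -balance_g mulnDr; have := size_fire w; lia.
Qed.

Lemma fire_distinct_labels : distinct_labels C -> distinct_labels C'.
Proof.
move=> [uniq_C one_place].
have uniq_v : uniq (S ++ rest) by rewrite -(perm_uniq perm_v).
have S_v x : x \in S -> x \in C v by rewrite (perm_mem perm_v) mem_cat => ->.
have mem_C' x w : x \in C' w ->
    (x \in C w) && (x \notin S) \/ is_child k v w /\ x = sent w.
  case/mem_fire_inv => [[-> x_rest] | [neq_wv xw] | ]; last by right.
    left; rewrite (perm_mem perm_v) mem_cat x_rest orbT /=.
    by move: uniq_v; rewrite cat_uniq => /and3P[_ /hasPn/(_ x x_rest)].
  left; rewrite xw /=; apply/negP => /S_v xv.
  by rewrite (one_place _ _ _ xw xv) eqxx in neq_wv.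
split=> [w | w1 w2 x].
  rewrite def_C'; case: ifP => [_ | /negbT neq_wv].
    by move: uniq_v; rewrite cat_uniq => /and3P[].
  case: ifP => child_w //; rewrite cats1 rcons_uniq uniq_C andbT.
  apply/negP => /one_place/(_ (S_v _ (sent_mem child_w))) eq_wv.
  by rewrite eq_wv eqxx in neq_wv.
move=> /mem_C'[/andP[x1 xS] | [child1 ->]] /mem_C'[/andP[x2 x2S] | [child2 x2]].
- exact: one_place x1 x2.
- by rewrite x2 sent_mem in xS.
- by rewrite sent_mem in x2S.
- rewrite (is_child_rcons_last child1) (is_child_rcons_last child2); congr rcons; apply/eqP.
  have uniq_S : uniq S by move: uniq_v; rewrite cat_uniq => /andP[].
  have last_lt w : is_child k v w -> last 0 w < size (sort leq S).
    by rewrite size_sort size_S => /and3P[].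
  by rewrite -(nth_uniq 0 (last_lt _ child1) (last_lt _ child2)) ?sort_uniq //; apply/eqP.
Qed.

Lemma fire_subtree_inside u A : prefix u v ->
  fire_step k (subtree C u (C u ++ A)) (subtree C' u (C' u ++ A)).
Proof.
case/prefixP => v' def_v.
exists v', S, (if v' is [::] then rest ++ A else rest); split=> //.
  case: v' def_v => [|a v'] def_v /=; last by rewrite -def_v.
  by rewrite cats0 in def_v; rewrite -def_v catA perm_cat2r.
move=> [|a w] /=.
  case: v' def_v => [|a v'] def_v /=; first by rewrite def_C' def_v cats0 eqxx.
  have neq_uv : (u == v) = false by rewrite def_v -{1}(cats0 u) eqseq_cat // andbF.
  by rewrite def_C' neq_uv def_v -{2}(cats0 u) is_child_cat.
rewrite def_C' def_v eqseq_cat // eqxx is_child_cat last_cat /=.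
by case: eqP => [<- | _].
Qed.

Lemma fire_subtree_outside u : ~~ prefix u v ->
  exists2 B, {subset B <= C v} &
    C' u = C u ++ B /\ forall w, w != [::] -> C' (u ++ w) = C (u ++ w).
Proof.
move=> not_uv.
have not_v w : (u ++ w == v) = false.
  by apply: contraNF not_uv => /eqP <-; exact: prefix_prefix.
exists (if is_child k v u then [:: sent u] else [::]).
  case: ifP => // child_u x; rewrite inE => /eqP ->.
  by rewrite (perm_mem perm_v) mem_cat sent_mem.
split; first by rewrite def_C' -{1}(cats0 u) not_v; case: ifP; rewrite ?cats0.
case/lastP=> [//|w i] _.
by rewrite def_C' not_v -rcons_cat is_child_rcons not_v.
Qed.

End FireStep.

Lemma reaches_chip_balance k m C C' : 0 < k ->
  reaches k C C' -> chip_balance k m C -> chip_balance k m C'.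
Proof.
move=> k_gt0; elim=> // C0 C1 C2 [v [S [rest [size_S perm_v def_C1]]]] _ IH bal0.
exact/IH/(fire_chip_balance size_S perm_v def_C1).
Qed.

Lemma reaches_mem k C C' x w : reaches k C C' -> x \in C' w -> exists w0, x \in C w0.
Proof.
move=> reach; elim: reach w => [C0 w x_w | C0 C1 C2 fire _ IH w /IH[w1 x_w1]].
  by exists w.
case: fire => v [S [rest [size_S perm_v def_C1]]].
by case: (mem_fire size_S perm_v def_C1 x_w1) => [x_w0 | [_ x_v]]; eexists; eauto.
Qed.

(* The first conjunct only strengthens the induction: it keeps [C u ++ A]
   duplicate-free. *)
Lemma reaches_subtree k u C C' : reaches k C C' -> distinct_labels C ->
  exists A, [/\ {in A, forall a, exists2 w, ~~ prefix u w & a \in C w},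
    uniq (C u ++ A) & reaches k (subtree C u (C u ++ A)) (subtree C' u (C' u))].
Proof.
elim=> [C0 | C0 C1 C2 fire _ IH] dist0.
  by exists [::]; rewrite cats0; split=> //; [exact: dist0.1 | exact: reaches_refl].
have [v [S [rest [size_S perm_v def_C1]]]] := fire.
have [A [out_A uniq_A reach_A]] := IH (fire_distinct_labels size_S perm_v def_C1 dist0).
have out_A0 : {in A, forall a, exists2 w, ~~ prefix u w & a \in C0 w}.
  move=> a /out_A[w out_w /(mem_fire size_S perm_v def_C1)[a_w | [child_w a_v]]].
    by exists w.
  exists v => //; apply: contra out_w => u_v.
  by rewrite (is_child_rcons_last child_w); exact: prefix_trans u_v (prefix_rcons _ _).
case: (boolP (prefix u v)) => [in_v | out_v].
  exists A; split=> //; last first.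
    exact: reaches_step (fire_subtree_inside size_S perm_v def_C1 A in_v) reach_A.
  move: uniq_A; rewrite !cat_uniq => /and3P[_ _ ->]; rewrite dist0.1 andbT /=.
  apply/hasPn => a /out_A0[w out_w a_w]; apply/negP => a_u.
  by move: out_w; rewrite -(dist0.2 _ _ _ a_u a_w) prefix_refl.
have [B B_v [C1_u C1_below]] := fire_subtree_outside size_S perm_v def_C1 out_v.
exists (B ++ A); split.
- by move=> a; rewrite mem_cat => /orP[/B_v a_v | /out_A0 //]; exists v.
- by rewrite catA -C1_u.
- have -> : subtree C0 u (C0 u ++ B ++ A) = subtree C1 u (C1 u ++ A).
    by apply: funext => -[|a w] /=; [rewrite C1_u catA | rewrite C1_below].
  exact: reach_A.
Qed.

Lemma chip_balance_stable k m C w : 0 < k -> chip_balance k m C -> stable k C ->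
  is_vertex k w -> size (C w) = (m %/ k ^ size w) %% k.
Proof.
move=> k_gt0 [g balance_g] stable_C.
have size_C x : size (C x) = inflow k m g x %% k.
  by rewrite -balance_g addnC mulnC modnMDl modn_small.
have fired x : g x = inflow k m g x %/ k.
  by rewrite -balance_g addnC mulnC divnMDl // divn_small ?addn0.
suff inflow_w : forall x, is_vertex k x -> inflow k m g x = m %/ k ^ size x.
  by move=> vertex_w; rewrite size_C inflow_w.
elim/last_ind => [|p i IH]; first by rewrite expn0 divn1.
rewrite inflow_rcons is_vertex_rcons => /andP[vertex_p lt_ik].
by rewrite vertex_p lt_ik size_rcons expnSr divnMA -IH // fired.
Qed.

Definition relabel (f : nat -> nat) (C : config) : config := fun w => map f (C w).

Lemma fire_relabel k f C C' : {homo f : x y / x <= y} ->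
  fire_step k C C' -> fire_step k (relabel f C) (relabel f C').
Proof.
move=> f_homo [v [S [rest [size_S perm_v def_C']]]].
have sort_map : sort leq (map f S) = map f (sort leq S).
  apply: (sorted_eq leq_trans anti_leq); first exact: (sort_sorted leq_total).
    exact/(homo_sorted f_homo)/(sort_sorted leq_total).
  by rewrite perm_sort perm_map // perm_sym perm_sort.
exists v, (map f S), (map f rest); split; first by rewrite size_map.
  by rewrite /relabel -map_cat perm_map.
move=> w; rewrite /relabel def_C'; case: ifP => // _; case: ifP => // child_w.
by rewrite map_cat sort_map (nth_map 0) // size_sort size_S; case/and3P: child_w.
Qed.

Lemma reaches_relabel k f C C' : {homo f : x y / x <= y} ->
  reaches k C C' -> reaches k (relabel f C) (relabel f C').
Proof.
move=> f_homo; elim=> [C0 | C0 C1 C2 fire _ IH]; first exact: reaches_refl.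
exact: reaches_step (fire_relabel f_homo fire) IH.
Qed.

Lemma reaches_perm k C D C' : reaches k C C' -> (forall w, perm_eq (C w) (D w)) ->
  exists2 D', reaches k D D' & forall w, perm_eq (D' w) (C' w).
Proof.
move=> reach; elim: reach D => [C0 C2 perm02 | C0 C1 C3 fire _ IH C2 perm02].
  by exists C2 => [|w]; [exact: reaches_refl | rewrite perm_sym].
have [v [S [rest [size_S perm_v def_C1]]]] := fire.
pose C2' w := if w == v then rest
  else if is_child k v w then C2 w ++ [:: nth 0 (sort leq S) (last 0 w)] else C2 w.
have perm12 w : perm_eq (C1 w) (C2' w).
  by rewrite def_C1 /C2'; case: ifP => // _; case: ifP => _; rewrite ?perm_cat2r.
have [C3' reach_C3' perm33] := IH C2' perm12.
exists C3' => //; apply: reaches_step reach_C3'; exists v, S, rest; split=> //.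
by apply: perm_trans perm_v; rewrite perm_sym.
Qed.

Definition rank_of (A : seq nat) (x : nat) : nat := count (fun a => a <= x) A.

Lemma rank_of_homo A : {homo rank_of A : x y / x <= y}.
Proof. by move=> x y le_xy; apply: sub_count => a /= /leq_trans; apply. Qed.

Lemma rank_of_lt A x y : x \in A -> y < x -> rank_of A y < rank_of A x.
Proof.
move=> x_A lt_yx; elim: A x_A => [//|a A IH]; rewrite inE /rank_of /=.
case: (eqVneq x a) => [<- _ | _ /= /IH lt_A]; last first.
  case: (leqP a y) => [le_ay | _]; last by rewrite add0n ltn_addl.
  by rewrite (leq_trans le_ay (ltnW lt_yx)) ltn_add2l.
by rewrite leqnn (leqNgt x y) lt_yx add1n ltnS rank_of_homo // ltnW.
Qed.

Lemma rank_of_sorted s : sorted ltn s -> map (rank_of s) s = iota 1 (size s).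
Proof.
elim: s => [//|a s IH] path_s; have lt_a_s := order_path_min ltn_trans path_s.
have rank_cons x : rank_of (a :: s) x = (a <= x) + rank_of s x by [].
have rank_a : rank_of s a = 0.
  apply/eqP; rewrite -leqn0 leqNgt -has_count.
  by apply/hasPn => b /(allP lt_a_s); rewrite -ltnNge.
change (rank_of (a :: s) a :: map (rank_of (a :: s)) s = 1 :: iota (1 + 1) (size s)).
rewrite rank_cons leqnn rank_a iotaDl -IH ?(path_sorted path_s) //.
rewrite -map_comp; congr (_ :: _); apply/eq_in_map => x /(allP lt_a_s) lt_ax.
by rewrite rank_cons (ltnW lt_ax).
Qed.

Lemma perm_rank_of A : uniq A -> perm_eq (map (rank_of A) A) (iota 1 (size A)).
Proof.
move=> uniq_A; have perm_A : perm_eq A (sort leq A) by rewrite perm_sym perm_sort.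
have rank_sort : rank_of A =1 rank_of (sort leq A) by move=> x; exact/permP.
apply: perm_trans (perm_map _ perm_A) _.
rewrite (eq_map rank_sort) (perm_size perm_A) rank_of_sorted //.
by rewrite ltn_sorted_uniq_leq sort_uniq uniq_A (sort_sorted leq_total).
Qed.

Lemma lds_ge s t : subseq t s -> sorted gtn t -> size t <= lds s.
Proof.
case/subseqP => m size_m -> sorted_t; have size_m' : size m == size s by apply/eqP.
exact: (@leq_bigmax_cond _ (fun m : (size s).-tuple bool => sorted gtn (mask m s))
  (fun m => size (mask m s)) (Tuple size_m')).
Qed.

Lemma lds_le s b :
    (forall m, size m = size s -> sorted gtn (mask m s) -> size (mask m s) <= b) ->
  lds s <= b.
Proof. by move=> le_b; apply/bigmax_leqP => m; apply: le_b; rewrite size_tuple. Qed.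

Lemma lds_size s : lds s <= size s.
Proof. by apply: lds_le => m _ _; rewrite size_subseq ?mask_subseq. Qed.

Lemma lds_cat s1 s2 : lds (s1 ++ s2) <= lds s1 + lds s2.
Proof.
apply: lds_le => m size_m.
have size_take_m : size (take (size s1) m) = size s1.
  by rewrite size_takel // size_m size_cat leq_addr.
rewrite -(cat_take_drop (size s1) m) mask_cat // => /cat_sorted2[sorted1 sorted2].
by rewrite size_cat leq_add // lds_ge ?mask_subseq.
Qed.

Lemma lds_map f s : {in s &, {homo f : x y / x < y}} -> lds s <= lds (map f s).
Proof.
move=> f_lt; apply: lds_le => m _ sorted_m.
rewrite -(size_map f) map_mask lds_ge ?mask_subseq // -map_mask.
apply: (homo_sorted_in (P := mem s)) sorted_m; first by move=> x y x_s y_s; apply: f_lt.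
by apply/allP => x /(mem_subseq (mask_subseq m s)).
Qed.

Lemma lds_blocks (g : nat -> nat) a b B :
    (forall t, t < a -> lds [seq g (t * b + j) | j <- iota 0 b] <= B) ->
  lds [seq g x | x <- iota 0 (a * b)] <= a * B.
Proof.
elim: a => [|a IH] lds_block; first by rewrite mul0n (leq_trans (lds_size _)).
rewrite mulSnr iotaD map_cat (leq_trans (lds_cat _ _)) // mulSnr leq_add //.
  by apply: IH => t lt_ta; apply: lds_block; rewrite ltnS ltnW.
by rewrite add0n -{1}(addn0 (a * b)) iotaDl -map_comp; exact: lds_block.
Qed.

Lemma lds_perm_of_le_D k l C : reachable_stable k l C -> lds (perm_of k l C) <= D k l.
Proof.
move=> reach_C; have lt_lds : lds (perm_of k l C) < (k ^ l).+1.
  by rewrite ltnS (leq_trans (lds_size _)) // size_map size_iota.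
apply: (@leq_bigmax_cond _ _ (fun m : 'I_(k ^ l).+1 => m) (Ordinal lt_lds)) => /=.
by apply: asboolT; exists C.
Qed.

Lemma eq_from_digits k a b : 1 < k ->
  (forall j, a %/ k ^ j %% k = b %/ k ^ j %% k) -> a = b.
Proof.
move=> k_gt1; have k_gt0 : 0 < k by rewrite ltnW.
suff eq_le N : a <= N -> b <= N -> (forall j, a %/ k ^ j %% k = b %/ k ^ j %% k) -> a = b.
  by apply: (eq_le (maxn a b)); rewrite ?leq_maxl ?leq_maxr.
elim: N a b => [|N IH] a b le_aN le_bN digits; first by lia.
have div_le c : c <= N.+1 -> c %/ k <= N by move=> le_c; rewrite -ltnS ltn_divLR //; nia.
rewrite (divn_eq a k) (divn_eq b k); congr (_ * k + _).
  apply: IH; rewrite ?div_le // => j; rewrite -!divnMA -expnS; exact: digits.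
by have := digits 0; rewrite expn0 !divn1.
Qed.

Lemma size_layer_vertex k l j : size (layer_vertex k l j) = l.
Proof. by rewrite size_map size_iota. Qed.

Lemma is_vertex_layer_vertex k l j : 0 < k -> is_vertex k (layer_vertex k l j).
Proof. by move=> k_gt0; apply/allP => x /mapP[i _ ->]; rewrite ltn_pmod. Qed.

Lemma layer_vertex_cat k p n t j : 0 < k -> j < k ^ n ->
  layer_vertex k (p + n) (t * k ^ n + j) = layer_vertex k p t ++ layer_vertex k n j.
Proof.
move=> k_gt0 lt_j; rewrite /layer_vertex iotaD map_cat; congr (_ ++ _).
  apply/eq_in_map => i; rewrite mem_iota add0n => /andP[_ lt_ip].
  rewrite (_ : p + n - i.+1 = n + (p - i.+1)); last by lia.
  by rewrite expnD divnMA divnMDl ?expn_gt0 ?k_gt0 // (divn_small lt_j) addn0.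
rewrite (addnC 0 p) iotaDl -map_comp; apply/eq_in_map => i.
rewrite mem_iota add0n => /andP[_ lt_in] /=.
rewrite (_ : p + n - (p + i).+1 = n - i.+1); last by lia.
rewrite (_ : t * k ^ n = t * k ^ i * k * k ^ (n - i.+1)); last first.
  by rewrite -!mulnA -expnS -expnD; congr (_ * k ^ _); lia.
by rewrite divnMDl ?expn_gt0 ?k_gt0 // modnMDl.
Qed.

Lemma reachable_stable_size k l C w : 0 < k -> reachable_stable k l C ->
  is_vertex k w -> size (C w) = (k ^ l %/ k ^ size w) %% k.
Proof.
move=> k_gt0 [reach stable_C]; apply: chip_balance_stable stable_C => //.
apply: reaches_chip_balance reach _ => //.
by rewrite -{1}(size_iota 1 (k ^ l)); apply: chip_balance_root.
Qed.

Lemma subtree_self C u w : subtree C u (C u) w = C (u ++ w).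
Proof. by case: w => //; rewrite cats0. Qed.

Lemma stable_subtree k C u : stable k C -> stable k (subtree C u (C u)).
Proof. by move=> stable_C w; rewrite subtree_self. Qed.

Lemma reaches_root_mem k X C x w : reaches k (root_config X) C -> x \in C w -> x \in X.
Proof. by move=> reach /(reaches_mem reach)[[|a w0]]. Qed.

Lemma subtree_reachable k p n C u : 1 < k -> reachable_stable k (p + n) C ->
    is_vertex k u -> size u = p ->
  exists2 X, uniq X /\ size X = k ^ n & reaches k (root_config X) (subtree C u (C u)).
Proof.
move=> k_gt1 reach_C vertex_u size_u; have k_gt0 : 0 < k by rewrite ltnW.
have dist0 : distinct_labels (init_config k (p + n)).
  by split=> [[|a w] | [|a1 w1] [|a2 w2] x] //; apply: iota_uniq.
have [A [_ uniq_X]] := reaches_subtree u reach_C.1 dist0.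
set X := _ ++ A; have -> : subtree (init_config k (p + n)) u X = root_config X.
  by apply: funext => -[|a w] //=; rewrite /init_config -size_eq0 size_cat addnS.
move=> reach_sub; exists X => //; split=> //.
have vertex_nseq j : is_vertex k (nseq j 0) by rewrite /is_vertex all_nseq k_gt0 orbT.
have balance_sub := reaches_chip_balance k_gt0 reach_sub (chip_balance_root k X).
apply: (eq_from_digits k_gt1) => j; rewrite -(size_nseq j 0).
rewrite -(chip_balance_stable k_gt0 balance_sub (stable_subtree u reach_C.2)) //.
rewrite subtree_self (reachable_stable_size k_gt0 reach_C); last first.
  by rewrite is_vertex_cat vertex_u vertex_nseq.
by rewrite size_cat size_u !size_nseq !expnD divnMl // expn_gt0 k_gt0.
Qed.

Lemma reaches_root_relabel k n X C : uniq X -> size X = k ^ n ->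
    reaches k (root_config X) C -> stable k C ->
  exists2 D', reachable_stable k n D' & forall w, perm_eq (D' w) (relabel (rank_of X) C w).
Proof.
move=> uniq_X size_X reach stable_C.
have perm_start w : perm_eq (relabel (rank_of X) (root_config X) w) (init_config k n w).
  by case: w => [|a w]; rewrite /relabel /init_config //= -size_X perm_rank_of.
have [D' reach_D' perm_D'] :=
  reaches_perm (reaches_relabel (@rank_of_homo X) reach) perm_start.
exists D' => //; split=> // w.
by rewrite (perm_size (perm_D' w)) size_map; apply: stable_C.
Qed.

Lemma block_lds_le_D k p n t C : 1 < k -> reachable_stable k (p + n) C ->
  lds [seq head 0 (C (layer_vertex k p t ++ layer_vertex k n j)) | j <- iota 0 (k ^ n)]
    <= D k n.
Proof.
move=> k_gt1 reach_C; have k_gt0 : 0 < k by rewrite ltnW.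
set u := layer_vertex k p t; set block := [seq head 0 _ | i <- _].
have vertex_u : is_vertex k u by apply: is_vertex_layer_vertex.
have [X [uniq_X size_X] reach_sub] :=
  subtree_reachable k_gt1 reach_C vertex_u (size_layer_vertex k p t).
have [D' reach_D' perm_D'] :=
  reaches_root_relabel uniq_X size_X reach_sub (stable_subtree u reach_C.2).
have one_chip j : size (C (u ++ layer_vertex k n j)) = 1.
  rewrite (reachable_stable_size k_gt0 reach_C) ?is_vertex_cat ?vertex_u;
    last exact: is_vertex_layer_vertex.
  by rewrite size_cat !size_layer_vertex divnn expn_gt0 k_gt0 modn_small.
have block_X j : head 0 (C (u ++ layer_vertex k n j)) \in X.
  apply: (reaches_root_mem (w := layer_vertex k n j) reach_sub).
  by rewrite subtree_self; case: (C _) (one_chip j) => [|c []] //= _; rewrite mem_head.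
apply: leq_trans (lds_perm_of_le_D reach_D').
have -> : perm_of k n D' = map (rank_of X) block.
  rewrite /perm_of /block -map_comp; apply/eq_in_map => j _ /=.
  rewrite (perm_small_eq _ (perm_D' _)) /relabel subtree_self ?size_map ?one_chip //.
  by case: (C _) (one_chip j) => [|c []].
by apply: lds_map => x y _ /mapP[j _ ->]; apply: rank_of_lt.
Qed.

Theorem proposition8p2 (k n l : nat) :
  2 <= k -> 1 <= n -> n <= l -> D k l <= D k n * k ^ (l - n).
Proof.
move=> k_gt1 _ le_nl; have [p ->] : exists p, l = p + n by exists (l - n); rewrite subnK.
rewrite addnK; apply/bigmax_leqP => _ /asboolP[C [reach_C <-]].
rewrite /perm_of expnD (mulnC (D k n)); apply: lds_blocks => t _.
suff -> : [seq head 0 (C (layer_vertex k (p + n) (t * k ^ n + j))) | j <- iota 0 (k ^ n)]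
    = [seq head 0 (C (layer_vertex k p t ++ layer_vertex k n j)) | j <- iota 0 (k ^ n)].
  exact: block_lds_le_D.
apply/eq_in_map => j; rewrite mem_iota => /andP[_ lt_j].
by rewrite /= layer_vertex_cat // ltnW.
Qed.
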